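(* For all integers $r,n,\nu\ge 0$ and all real $x$, $$\frac{d^\nu}{dx^\nu}H_{r,n}(x)=r!\,n!\sum_{j=0}^{\nu}\alpha_{j,\nu}\,\frac{H_{r-\nu+j,\,n-j}(x)}{(r-\nu+j)!\,(n-j)!},$$ where any term with $r-\nu+j<0$ or $n-j<0$ is interpreted as $0$, and the numbers $\alpha_{j,\nu}$ ($0\le j\le\nu$) are defined by $\alpha_{0,\nu}=2^\nu$, $\alpha_{\nu,\nu}=1$, and $\alpha_{j,\nu}=2\alpha_{j,\nu-1}+\alpha_{j-1,\nu-1}$ for $1\le j<\nu$.
   Context: For integers $m,n\ge 0$, the two-index Hermite polynomial is $H_{m,n}(x)=\left(-\frac{d}{dx}+2x\right)^m(x^n)$, i.e. the operator $f\mapsto -f'+2xf$ applied $m$ times to $x^n$; by convention $H_{m,n}=0$ whenever $m<0$ or $n<0$. *)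

(* H_{m,n} is a polynomial; we work in {poly R} over an
   arbitrary real field R and use the formal derivative. *)
From HB Require Import structures.
From mathcomp Require Import all_boot all_order all_algebra.
Set Implicit Arguments. Unset Strict Implicit. Unset Printing Implicit Defensive.
Import Order.TTheory GRing.Theory Num.Theory.
Local Open Scope ring_scope.

Definition Hop (R : realFieldType) (p : {poly R}) : {poly R} :=
  - p^`() + 2%:P * 'X * p.

Definition Hpoly (R : realFieldType) (m n : nat) : {poly R} :=
  iter m (@Hop R) ('X^n).

Fixpoint alpha (j nu : nat) : nat :=
  match nu with
  | 0 => 1
  | nu'.+1 =>
      if j == 0 then 2 ^ nu
      else if j == nu then 1
      else 2 * alpha j nu' + alpha j.-1 nu'
  end%N.

From HB Require Import structures.
From mathcomp Require Import all_boot all_order all_algebra.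
From mathcomp Require Import zify ring.
Import Order.TTheory GRing.Theory Num.Theory.
Local Open Scope ring_scope.

(* The operator Hop = -d/dx + 2x satisfies the commutation
   relation [d/dx, Hop] = 2, from which one gets the lowering rule
     H_{m,n}' = 2m H_{m-1,n} + n H_{m,n-1}.
   After the normalisation G_{a,b} = H_{a,b} / (a! b!), extended by 0 to
   negative integer indices a, b, this becomes the index-free rule
     G_{a,b}' = 2 G_{a-1,b} + G_{a,b-1}.
   Any family of polynomials obeying this rule has nu-th derivative
     G_{a,b}^(nu) = sum_{j <= nu} beta_{j,nu} G_{a-nu+j,b-j},
   where beta satisfies the Pascal-like recursion
   beta_{j,nu+1} = 2 beta_{j,nu} + beta_{j-1,nu}; on 0 <= j <= nu these
   are exactly the numbers alpha_{j,nu}.  The theorem follows by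
   multiplying back by r! n!, evaluating at x, and observing that the terms
   with a negative index vanish. *)

(* beta j nu: the coefficients of the iterated lowering rule, given by a
   single recursion valid for every j (beta j nu = 0 when j > nu). *)
Fixpoint beta (j nu : nat) : nat :=
  match nu with
  | 0 => (j == 0 : nat)
  | nu'.+1 => 2 * beta j nu' + (if j is j'.+1 then beta j' nu' else 0)
  end.

Lemma beta_gt j nu : (nu < j)%N -> beta j nu = 0%N.
Proof. by elim: nu j => [|nu IH] [|j] //= ltnj; rewrite !IH //; lia. Qed.

Lemma beta0 nu : beta 0 nu = (2 ^ nu)%N.
Proof. by elim: nu => //= nu ->; rewrite addn0 expnS. Qed.

Lemma beta_diag nu : beta nu nu = 1%N.
Proof. by elim: nu => //= nu ->; rewrite beta_gt. Qed.

Lemma alpha_beta j nu : (j <= nu)%N -> alpha j nu = beta j nu.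
Proof.
elim: nu j => [|nu IH] j le_j_nu /=; first by case: j le_j_nu.
case: j le_j_nu => [|j] le_j_nu /=; first by rewrite beta0 addn0 expnS.
have [->|ne_j_nu] := eqVneq j nu; first by rewrite eqxx beta_diag beta_gt.
by rewrite eqSS (negbTE ne_j_nu) !IH //; lia.
Qed.

Section IteratedLowering.
Variables (R : nzRingType) (F : int -> int -> {poly R}).

Hypothesis F_deriv : forall a b, (F a b)^`() = 2 *: F (a - 1) b + F a (b - 1).

Lemma derivn_lowering a b nu :
  (F a b)^`(nu) =
  \sum_(j < nu.+1) (beta j nu)%:R *: F (a - nu%:Z + j%:Z) (b - j%:Z).
Proof.
elim: nu => [|nu IH]; first by rewrite big_ord1 /= scale1r; congr F; lia.
rewrite derivnS IH raddf_sum /=.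
under eq_bigr do rewrite derivZ F_deriv scalerDr !scalerA.
under [RHS]eq_bigr do rewrite /= natrD scalerDl.
rewrite !big_split /=; congr (_ + _).
  rewrite [RHS]big_ord_recr /= beta_gt // muln0 scale0r addr0.
  apply: eq_bigr => j _; rewrite mulnC natrM; congr (_ *: F _ _); lia.
rewrite [RHS]big_ord_recl /= scale0r add0r.
by apply: eq_bigr => j _; rewrite /bump /=; congr (_ *: F _ _); lia.
Qed.

End IteratedLowering.

Section Hermite.
Variable R : realFieldType.

Lemma HopD (p q : {poly R}) : Hop (p + q) = Hop p + Hop q.
Proof. rewrite /Hop derivD; ring. Qed.

Lemma HopZ (c : R) (p : {poly R}) : Hop (c *: p) = c *: Hop p.
Proof. rewrite /Hop derivZ -!mul_polyC; ring. Qed.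

Lemma deriv_Hop (p : {poly R}) : (Hop p)^`() = Hop p^`() + 2 *: p.
Proof.
rewrite /Hop derivD derivN !derivM derivX derivC -!mul_polyC mul0r add0r mulr1.
by rewrite [2%:P * p + _]addrC addrA.
Qed.

Lemma HpolyS m n : Hpoly R m.+1 n = Hop (Hpoly R m n).
Proof. by rewrite /Hpoly iterS. Qed.

Lemma deriv_Hpoly m n :
  (Hpoly R m n)^`() = (2 * m)%:R *: Hpoly R m.-1 n + n%:R *: Hpoly R m n.-1.
Proof.
elim: m => [|m IH].
  by rewrite /Hpoly /= derivXn muln0 scale0r add0r scaler_nat.
rewrite HpolyS deriv_Hop IH HopD !HopZ -!HpolyS.
have -> : (2 * m)%:R *: Hop (Hpoly R m.-1 n) = (2 * m)%:R *: Hpoly R m n.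
  by case: m {IH} => [|m]; rewrite ?muln0 ?scale0r // -HpolyS.
rewrite mulnS natrD -!mul_polyC !rmorphD /= !polyC1; ring.
Qed.

Lemma fact_neq0 k : (k`!)%:R != 0 :> R.
Proof. by rewrite pnatr_eq0 -lt0n fact_gt0. Qed.

Definition Gnorm (a b : int) : {poly R} :=
  match a, b with
  | Posz m, Posz n => ((m`! * n`!)%:R)^-1 *: Hpoly R m n
  | _, _ => 0
  end.

Lemma Gnorm_neg a b : ((a < 0) || (b < 0))%R -> Gnorm a b = 0.
Proof. by case: a => [m|k]; case: b => [n|l]. Qed.

Lemma Gnorm_nat (m n : nat) : Gnorm m n = ((m`! * n`!)%:R)^-1 *: Hpoly R m n.
Proof. by []. Qed.

Lemma Gnorm_predl (m n : nat) :
  Gnorm (m%:Z - 1) n = if m is m'.+1 then Gnorm m' n else 0.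
Proof. by case: m => [|m] //; congr (Gnorm _ _); lia. Qed.

Lemma Gnorm_predr (m n : nat) :
  Gnorm m (n%:Z - 1) = if n is n'.+1 then Gnorm m n' else 0.
Proof. by case: n => [|n] //; congr (Gnorm _ _); lia. Qed.

Lemma deriv_Gnorm a b : (Gnorm a b)^`() = 2 *: Gnorm (a - 1) b + Gnorm a (b - 1).
Proof.
case: a => [m|k]; last first.
  by rewrite !Gnorm_neg ?deriv0 ?scaler0 ?addr0 //; apply/orP; left; lia.
case: b => [n|l]; last first.
  by rewrite !Gnorm_neg ?deriv0 ?scaler0 ?addr0 //; apply/orP; right; lia.
rewrite Gnorm_predl Gnorm_predr Gnorm_nat derivZ deriv_Hpoly scalerDr !scalerA.
have fact_ne0 := fact_neq0; congr (_ + _).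
  case: m => [|m]; first by rewrite muln0 mulr0 scale0r scaler0.
  rewrite Gnorm_nat scalerA; congr (_ *: _).
  by rewrite factS !natrM; field; rewrite !fact_ne0 nat1r pnatr_eq0.
case: n => [|n]; first by rewrite mulr0 scale0r.
rewrite Gnorm_nat; congr (_ *: _).
by rewrite factS !natrM; field; rewrite !fact_ne0 nat1r pnatr_eq0.
Qed.

Lemma Gnorm_shift (r n nu j : nat) : (j <= nu)%N ->
  Gnorm (r%:Z - nu%:Z + j%:Z) (n%:Z - j%:Z) =
  if (nu - j <= r)%N && (j <= n)%N then Gnorm (r - (nu - j))%N (n - j)%N else 0.
Proof.
move=> le_j_nu; case: ifP => [/andP[le_r le_n] | /negbT].
  by congr (Gnorm _ _); lia.
rewrite negb_and -!ltnNge => /orP[gt_r | gt_n]; apply: Gnorm_neg; apply/orP.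
  by left; lia.
by right; lia.
Qed.

End Hermite.

Theorem mainTheorem15 (R : realFieldType) (r n nu : nat) (x : R) :
  ((Hpoly R r n)^`(nu)).[x] =
  (r`!)%:R * (n`!)%:R *
  \sum_(j < nu.+1)
     (if ((nu - j <= r)%N && (j <= n)%N) then
        (alpha j nu)%:R * (Hpoly R (r - (nu - j)) (n - j)).[x]
          / ((r - (nu - j))`!)%:R / ((n - j)`!)%:R
      else 0).
Proof.
have fact_ne0 := @fact_neq0 R.
have -> : Hpoly R r n = (r`! * n`!)%:R *: Gnorm R r n.
  by rewrite Gnorm_nat scalerA mulfV ?scale1r // natrM mulf_neq0.
rewrite derivnZ (@derivn_lowering _ _ (@deriv_Gnorm R) r n nu).
rewrite hornerZ natrM horner_sum.
congr (_ * _); apply: eq_bigr => j _.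
rewrite hornerZ (@Gnorm_shift R r n nu j); last by rewrite -ltnS.
case: ifP => _; last by rewrite horner0 mulr0.
rewrite Gnorm_nat hornerZ alpha_beta; last by rewrite -ltnS.
by rewrite natrM invfM; field; rewrite !fact_ne0.
Qed.
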